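(* Let $L_{\mathcal{F}}$ and $L_{\mathcal{R}}$ be Lipschitz constants of $\mathcal{F}$ and $\mathcal{R}$ over $\Omega_\theta$, and suppose $\beta>L_{\mathcal{F}}+L_{\mathcal{R}}$. If $\bar z\in\mathcal{Z}$ with $\mathcal{O}(\bar z)<\theta$ is a d-stationary point of problem (LRP), then $\bar z\in\Omega_1$ and $\bar z$ is a d-stationary point of problem (RP) and of problem (R).
   Context: Let $N,N_0,N_1$ be positive integers, $X=(x_1,\ldots,x_N)\in\mathbb{R}^{N_0\times N}$ a given data matrix, and $\lambda_1,\lambda_2,\beta>0$ given parameters. For a real vector $y$, $(y)_+=\max\{y,0\}$ componentwise; $e$ denotes the all-ones vector of $\mathbb{R}^{N_1}$. For a matrix $Y$, $\|Y\|_F$ is the Frobenius norm and $\|Y\|_1$ the maximum absolute column sum. The variable is $z=(\mathrm{vec}(W)^\top,b^\top,\mathrm{vec}(V)^\top)^\top\in\mathbb{R}^{N_2}$, $N_2=N_0N_1+N_1+N_0+N_1N$, where $W\in\mathbb{R}^{N_1\times N_0}$, $b=(b_1^\top,b_2^\top)^\top$ with $b_1\in\mathbb{R}^{N_1}$, $b_2\in\mathbb{R}^{N_0}$, $V=(v_1,\ldots,v_N)\in\mathbb{R}^{N_1\times N}$, and vec is columnwise vectorization. Define $\mathcal{F}(z)=\frac1N\sum_{n=1}^N\|(W^\top v_n+b_2)_+-x_n\|_2^2$, $\mathcal{R}(z)=\lambda_1\sum_{n=1}^N e^\top v_n+\lambda_2\|W\|_F^2$, $\mathcal{P}(z)=\beta\sum_{n=1}^N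 e^\top(v_n-(Wx_n+b_1)_+)$, and $\mathcal{O}=\mathcal{F}+\mathcal{R}+\mathcal{P}$. Let $\Omega_1=\{z: v_n=(Wx_n+b_1)_+,\ n=1,\ldots,N\}$, $\Omega_2=\{z: v_n\ge (Wx_n+b_1)_+,\ n=1,\ldots,N\}$. Fix $\theta>\frac1N\|X\|_F^2$ and set $\alpha=\max\left\{\frac{\theta}{\lambda_1}+\sqrt{\frac{N_1N_0\theta}{\lambda_2}}\|X\|_1,\ \frac{\theta\sqrt{N_1N_0\theta}}{\lambda_1\sqrt{\lambda_2}}+\sqrt{N\theta}+\|X\|_1\right\}$. Let $\Omega_3=\{z:\|b\|_\infty\le\alpha\}$, $\mathcal{Z}=\Omega_2\cap\Omega_3$, $\Omega_\theta=\{z\in\Omega_2:\mathcal{O}(z)\le\theta\}$. Problem (R): minimize $\mathcal{F}(z)+\mathcal{R}(z)$ over $\Omega_1$; problem (RP): minimize $\mathcal{O}(z)$ over $\Omega_2$; problem (LRP): minimize $\mathcal{O}(z)$ over $\mathcal{Z}$. For a directionally differentiable $f$, $f'(y;d)=\lim_{t\downarrow0}(f(y+td)-f(y))/t$ ($\mathcal{F}$, $\mathcal{O}$ are piecewise smooth and locally Lipschitz, hence directionally differentiable). For a set $\Omega$ and $\bar y\in\Omega$, the tangent cone is $\mathcal{T}_\Omega(\bar y)=\{d: d=\lim (y-\bar y)/\tau \text{ for some } y\in\Omega,\ y\to\bar y,\ \tau\downarrow0\}$. A point $\bar z\in\Omega_1$ is a d-stationary point of (R) if $\mathcal{F}'(\bar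 z;d)+\nabla\mathcal{R}(\bar z)^\top d\ge0$ for all $d\in\mathcal{T}_{\Omega_1}(\bar z)$; $\bar z\in\Omega_2$ is a d-stationary point of (RP) if $\mathcal{O}'(\bar z;d)\ge0$ for all $d\in\mathcal{T}_{\Omega_2}(\bar z)$; $\bar z\in\mathcal{Z}$ is a d-stationary point of (LRP) if $\mathcal{O}'(\bar z;d)\ge0$ for all $d\in\mathcal{T}_{\mathcal{Z}}(\bar z)$. *)

From HB Require Import structures.
From mathcomp Require Import all_boot all_order all_algebra.
From mathcomp Require Import all_classical all_reals all_analysis.
Set Implicit Arguments. Unset Strict Implicit. Unset Printing Implicit Defensive.
Import Order.TTheory GRing.Theory Num.Theory.
Import numFieldNormedType.Exports.
Local Open Scope classical_set_scope.
Local Open Scope ring_scope.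

(* The variable z = (vec W, b = (b1;b2), vec V). *)
Record var (R : realType) (N0 N1 N : nat) := Var {
  zW  : 'M[R]_(N1, N0);
  zb1 : 'cV[R]_N1;
  zb2 : 'cV[R]_N0;
  zV  : 'M[R]_(N1, N) }.

Section Defs.
Variables (R : realType) (N0 N1 N : nat).
Local Notation V := (var R N0 N1 N).

Definition vadd (z z' : V) : V :=
  Var (zW z + zW z') (zb1 z + zb1 z') (zb2 z + zb2 z') (zV z + zV z').
Definition vscale (t : R) (z : V) : V :=
  Var (t *: zW z) (t *: zb1 z) (t *: zb2 z) (t *: zV z).
Definition vsub (z z' : V) : V := vadd z (vscale (-1) z').

Definition sqF {m n : nat} (A : 'M[R]_(m, n)) : R := \sum_i \sum_j A i j ^+ 2.
Definition normF {m n : nat} (A : 'M[R]_(m, n)) : R := Num.sqrt (sqF A).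
Definition norm1 {m n : nat} (A : 'M[R]_(m, n)) : R :=
  \big[Num.max/0]_(j < n) \sum_(i < m) `|A i j|.
Definition normInf {m n : nat} (A : 'M[R]_(m, n)) : R :=
  \big[Num.max/0]_(i < m) \big[Num.max/0]_(j < n) `|A i j|.

Definition znorm (z : V) : R :=
  Num.sqrt (sqF (zW z) + sqF (zb1 z) + sqF (zb2 z) + sqF (zV z)).
Definition bnormInf (z : V) : R := Num.max (normInf (zb1 z)) (normInf (zb2 z)).

Definition relu {m n : nat} (A : 'M[R]_(m, n)) : 'M[R]_(m, n) :=
  map_mx (fun a => Num.max a 0) A.

Variable X : 'M[R]_(N0, N).
Variables (lam1 lam2 beta : R).

Definition Fobj (z : V) : R :=
  N%:R^-1 * \sum_(n < N) sqF (relu ((zW z)^T *m col n (zV z) + zb2 z) - col n X).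
Definition Robj (z : V) : R :=
  lam1 * (\sum_(n < N) \sum_(i < N1) zV z i n) + lam2 * sqF (zW z).
Definition Pobj (z : V) : R :=
  beta * \sum_(n < N) \sum_(i < N1)
           (zV z i n - relu (zW z *m col n X + zb1 z) i ord0).
Definition Oobj (z : V) : R := Fobj z + Robj z + Pobj z.

Definition gradR_dot (z d : V) : R :=
  lam1 * (\sum_(n < N) \sum_(i < N1) zV d i n)
  + lam2 * (2 * \sum_i \sum_j zW z i j * zW d i j).

Definition Omega1 : set V :=
  [set z | forall n : 'I_N, col n (zV z) = relu (zW z *m col n X + zb1 z)].
Definition Omega2 : set V :=
  [set z | forall (n : 'I_N) (i : 'I_N1),
      relu (zW z *m col n X + zb1 z) i ord0 <= zV z i n].
Definition Omega3 (alpha : R) : set V := [set z | bnormInf z <= alpha].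
Definition Zset (alpha : R) : set V := Omega2 `&` Omega3 alpha.
Definition Omega_theta (theta : R) : set V := [set z | Omega2 z /\ Oobj z <= theta].

Definition alpha_of (theta : R) : R :=
  Num.max (theta / lam1 + Num.sqrt ((N1 * N0)%:R * theta / lam2) * norm1 X)
          (theta * Num.sqrt ((N1 * N0)%:R * theta) / (lam1 * Num.sqrt lam2)
           + Num.sqrt (N%:R * theta) + norm1 X).

End Defs.

Section Generic.
Variables (R : realType) (N0 N1 N : nat).
Local Notation V := (var R N0 N1 N).

Definition lip_const_on (f : V -> R) (S : set V) (L : R) : Prop :=
  0 <= L /\ forall z z', S z -> S z' -> `|f z - f z'| <= L * znorm (vsub z z').

Definition is_dirderiv (f : V -> R) (y d : V) (l : R) : Prop :=
  (fun t : R => (f (vadd y (vscale t d)) - f y) / t) @ 0^'+ --> l.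

Definition tangent_cone (S : set V) (ybar : V) : set V :=
  [set d | exists (y : nat -> V) (tau : nat -> R),
     (forall k, S (y k)) /\ (forall k, 0 < tau k) /\
     tau @ \oo --> 0 /\
     (fun k => znorm (vsub (y k) ybar)) @ \oo --> 0 /\
     (fun k => znorm (vsub (vscale (tau k)^-1 (vsub (y k) ybar)) d)) @ \oo --> 0].

Definition dstat_on (f : V -> R) (S : set V) (zbar : V) : Prop :=
  S zbar /\ forall d, tangent_cone S zbar d ->
    forall l, is_dirderiv f zbar d l -> 0 <= l.
End Generic.

Definition dstat_R (R : realType) (N0 N1 N : nat) (X : 'M[R]_(N0, N))
    (lam1 lam2 : R) (zbar : var R N0 N1 N) : Prop :=
  Omega1 X zbar /\ forall d, tangent_cone (Omega1 X) zbar d ->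
    forall l, is_dirderiv (Fobj X) zbar d l ->
      0 <= l + gradR_dot lam1 lam2 zbar d.

(* The objective has one-sided derivatives along every line, computed with the
   chain rule for [(.)_+] ([dmax0]).
   (i) If some [v_{i,n}] exceeds [(W x_n + b1)_+] at [zbar], lowering that entry
   is feasible in [Z]; [P] then decreases at rate [beta] while [F] and [R] grow at
   rate at most [L_F + L_R < beta], contradicting d-stationarity.  Hence
   [zbar \in Omega1].
   (ii) [O(zbar) < theta] bounds [W] and [V], hence the pre-activations, and the
   choice of [alpha] then forbids [b = alpha] and makes every ReLU fed by a bias
   at [-alpha] inactive near [zbar].  Zeroing those active bias components maps a
   tangent direction of [Omega2] to one of [Z] without changing the directional
   derivative of [O], so d-stationarity on [Z] carries over to [Omega2].
   (iii) Along a tangent direction of [Omega1] the [v]-component equals the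
   directional derivative of [(W x_n + b1)_+], so [P'(zbar; d) = 0] and
   [O'(zbar; d) = F'(zbar; d) + grad R(zbar)^T d]. *)

From mathcomp Require Import all_boot all_order all_algebra.
From mathcomp Require Import all_classical all_reals all_analysis.
From mathcomp Require Import ring lra.
Import Order.TTheory GRing.Theory Num.Theory.
Import numFieldNormedType.Exports.
Local Open Scope classical_set_scope.
Local Open Scope ring_scope.

Section RealFacts.
Context {R : realFieldType}.

Lemma cvg_near_eq {T : Type} {F : set_system T} {FF : Filter F} {f g : T -> R} {l : R} :
  {near F, f =1 g} -> g @ F --> l -> f @ F --> l.
Proof. by move=> fg; apply: cvg_trans; apply: near_eq_cvg; apply: filterS fg. Qed.

Lemma cvg_dist_le {T : Type} {F : set_system T} {FF : Filter F} {a e : T -> R} {b : R}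
  (C : R) : e @ F --> 0 -> (forall k, `|b - a k| <= C * e k) -> a @ F --> b.
Proof.
move=> he hae; have Ce : (fun k => C * e k) @ F --> 0.
  by rewrite -(mulr0 C); apply: cvgM => //; exact: cvg_cst.
apply/cvgrPdist_lt => eps eps_gt0; near=> k.
by apply: le_lt_trans (hae k) _; near: k; exact: cvgr_lt Ce _ eps_gt0.
Unshelve. all: by end_near. Qed.

Lemma ler_sum_term {I : finType} (F : I -> R) i0 :
  (forall i, 0 <= F i) -> F i0 <= \sum_i F i.
Proof. by move=> F_ge0; rewrite (bigD1 i0) //= lerDl sumr_ge0. Qed.

Lemma ltr_norm_neq (b a : R) : `|b| <= a -> b != a -> b != - a -> `|b| < a.
Proof.
rewrite ler_norml ltr_norml => /andP[ab ba] nba nbNa.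
by rewrite !lt_neqAle ab ba nba eq_sym nbNa.
Qed.

Lemma ler_dist_max0 (x y : R) : `|Num.max x 0 - Num.max y 0| <= `|x - y|.
Proof.
have := ler_norm (x - y); have := ler_norm (y - x); rewrite distrC.
by rewrite ler_norml; case: (leP 0 x) => hx; case: (leP 0 y) => hy; lra.
Qed.

Lemma near_norm_le_clip {a : nat -> R} {b alpha : R} (c : bool) :
  a @ \oo --> b -> `|b| <= alpha -> (~~ c -> `|b| < alpha) ->
  \forall k \near \oo, `|b + (if c then 0 else a k - b)| <= alpha.
Proof.
move=> ab b_le; case: c => [_|/(_ isT) b_lt]; first by near=> k; rewrite addr0.
near=> k; rewrite addrCA subrr addr0; apply: ltW.
by near: k; exact: cvgr_lt (cvg_norm ab) _ b_lt.
Unshelve. all: by end_near. Qed.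

End RealFacts.

Section RightDerivative.
Context {R : realFieldType}.
Implicit Types (f g : R -> R) (a c p q s : R).

Definition is_rderiv0 f q : Prop := (fun t => (f t - f 0) / t) @ 0^'+ --> q.

(* [dmax0 p q] is the one-sided derivative of [x |-> max x 0] at [p] along [q]. *)
Definition dmax0 p q : R := if 0 < p then q else if p < 0 then 0 else Num.max q 0.

Lemma dmax0_0 p : dmax0 p 0 = 0.
Proof. by rewrite /dmax0 maxxx; case: ifP => //; case: ifP. Qed.

Lemma is_rderiv0_eq {f g q q'} :
  is_rderiv0 g q -> f =1 g -> q = q' -> is_rderiv0 f q'.
Proof. by move=> + /funext -> <-. Qed.

Lemma is_rderiv0_near_eq {f g q} :
  {near 0^'+, f =1 g} -> f 0 = g 0 -> is_rderiv0 g q -> is_rderiv0 f q.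
Proof.
by move=> fg fg0 hg; apply: cvg_near_eq hg; apply: filterS fg => t /= ->; rewrite fg0.
Qed.

Lemma is_rderiv0_cvg {f q} : is_rderiv0 f q -> f @ 0^'+ --> f 0.
Proof.
move=> hf.
have hlin : (fun t => f 0 + t * ((f t - f 0) / t)) @ 0^'+ --> f 0 + 0 * q.
  apply: cvgD; first exact: cvg_cst.
  by apply: cvgM => //; exact: (cvg_at_right_filter cvg_id).
rewrite mul0r addr0 in hlin; apply: cvg_near_eq hlin; near=> t.
have t_neq0 : t != 0 by apply: lt0r_neq0; near: t; exact: nbhs_right_gt.
by rewrite mulrC divfK // addrC subrK.
Unshelve. all: by end_near. Qed.

Lemma is_rderiv0_lt0 {f q} : is_rderiv0 f q -> f 0 < 0 ->
  \forall t \near 0^'+, f t < 0.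
Proof. by move=> /is_rderiv0_cvg hf /(cvgr_lt _ hf). Qed.

Lemma is_rderiv0_affine a c : is_rderiv0 (fun t => a + t * c) c.
Proof.
apply: cvg_near_eq (cvg_cst c); near=> t.
have t_neq0 : t != 0 by apply: lt0r_neq0; near: t; exact: nbhs_right_gt.
by rewrite mul0r addr0 addrC addKr mulrC mulKf.
Unshelve. all: by end_near. Qed.

Lemma is_rderiv0_cst a : is_rderiv0 (fun=> a) 0.
Proof.
rewrite /is_rderiv0; under eq_fun do rewrite subrr mul0r.
exact: cvg_cst.
Qed.

Lemma is_rderiv0D {f g q s} :
  is_rderiv0 f q -> is_rderiv0 g s -> is_rderiv0 (f \+ g) (q + s).
Proof.
move=> hf hg; rewrite /is_rderiv0.
under eq_fun do rewrite /= opprD addrACA mulrDl.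
exact: cvgD.
Qed.

Lemma is_rderiv0Ml c {f q} : is_rderiv0 f q -> is_rderiv0 (fun t => c * f t) (c * q).
Proof.
move=> hf; rewrite /is_rderiv0.
under eq_fun do rewrite -mulrBr -mulrA.
by apply: cvgM => //; exact: cvg_cst.
Qed.

Lemma is_rderiv0N {f q} : is_rderiv0 f q -> is_rderiv0 (fun t => - f t) (- q).
Proof.
by move=> /(is_rderiv0Ml (-1)) /is_rderiv0_eq; apply=> [t|]; rewrite mulN1r.
Qed.

Lemma is_rderiv0M {f g q s} : is_rderiv0 f q -> is_rderiv0 g s ->
  is_rderiv0 (f \* g) (q * g 0 + f 0 * s).
Proof.
move=> hf hg; rewrite /is_rderiv0.
have prod t : (f t * g t - f 0 * g 0) / t =
    (f t - f 0) / t * g t + f 0 * ((g t - g 0) / t) by ring.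
under eq_fun do rewrite /= prod.
apply: cvgD; apply: cvgM => //; [exact: is_rderiv0_cvg hg | exact: cvg_cst].
Qed.

Lemma is_rderiv0_sum {I : Type} (r : seq I) {f : I -> R -> R} {q : I -> R} :
  (forall i, is_rderiv0 (f i) (q i)) ->
  is_rderiv0 (fun t => \sum_(i <- r) f i t) (\sum_(i <- r) q i).
Proof.
move=> hf; elim: r => [|i r IHr].
  by apply: is_rderiv0_eq (is_rderiv0_cst 0) _ _ => [t|]; rewrite big_nil.
by apply: is_rderiv0_eq (is_rderiv0D (hf i) IHr) _ _ => [t|]; rewrite big_cons.
Qed.

Lemma is_rderiv0_max0 {f q} :
  is_rderiv0 f q -> is_rderiv0 (fun t => Num.max (f t) 0) (dmax0 (f 0) q).
Proof.
move=> hf; have fc := is_rderiv0_cvg hf; rewrite /is_rderiv0 /dmax0.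
have [f0_gt0|] := ltP 0 (f 0).
  apply: cvg_near_eq hf; near=> t.
  have ft_gt0 : 0 < f t by near: t; exact: cvgr_gt fc _ f0_gt0.
  by rewrite (max_l (ltW ft_gt0)).
rewrite le_eqVlt => /orP[/eqP f00|f0_lt0]; last first.
  rewrite f0_lt0.
  apply: cvg_near_eq (cvg_cst 0); near=> t.
  have ft_lt0 : f t < 0 by near: t; exact: cvgr_lt fc _ f0_lt0.
  by rewrite (max_r (ltW ft_lt0)) subrr mul0r.
have max0E (x : R) : Num.max x 0 = (x + `|x|) / 2.
  have [x_ge0|x_lt0] := leP 0 x; last by rewrite ltr0_norm // subrr mul0r.
  by rewrite ger0_norm //; lra.
rewrite f00 ltxx max0E.
have hkink : (fun t => ((f t - f 0) / t + `|(f t - f 0) / t|) / 2) @ 0^'+ -->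
    (q + `|q|) / 2.
  by apply: cvgM; [apply: cvgD => //; exact: cvg_norm | exact: cvg_cst].
apply: cvg_near_eq hkink; near=> t.
have t_gt0 : 0 < t by near: t; exact: nbhs_right_gt.
rewrite f00 !subr0 max0E normrM (gtr0_norm (x := t^-1)) ?invr_gt0 //.
by ring.
Unshelve. all: by end_near. Qed.

End RightDerivative.

Section MatrixNorms.
Context {R : realType}.

Lemma sqF_ge0 {m n} (A : 'M[R]_(m, n)) : 0 <= sqF A.
Proof. by apply: sumr_ge0 => i _; apply: sumr_ge0 => j _; exact: sqr_ge0. Qed.

Lemma sqF0 {m n} : sqF (0 : 'M[R]_(m, n)) = 0.
Proof. by rewrite /sqF big1 // => i _; rewrite big1 // => j _; rewrite mxE expr0n. Qed.

Lemma sqFN {m n} (A : 'M[R]_(m, n)) : sqF (- A) = sqF A.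
Proof. by apply: eq_bigr => i _; apply: eq_bigr => j _; rewrite mxE sqrrN. Qed.

Lemma sqF_vscale {m n} c (A : 'M[R]_(m, n)) : sqF (c *: A) = c ^+ 2 * sqF A.
Proof.
rewrite /sqF mulr_sumr; apply: eq_bigr => i _; rewrite mulr_sumr.
by apply: eq_bigr => j _; rewrite mxE exprMn.
Qed.

Lemma sqF_tr {m n} (A : 'M[R]_(m, n)) : sqF A^T = sqF A.
Proof.
by rewrite /sqF exchange_big; apply: eq_bigr => i _; apply: eq_bigr => j _; rewrite mxE.
Qed.

Lemma entry_le_sqrt {m n} (A : 'M[R]_(m, n)) i j s : sqF A <= s ->
  `|A i j| <= Num.sqrt s.
Proof.
move=> hs; rewrite -sqrtr_sqr ler_sqrt ?(le_trans (sqF_ge0 A)) //.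
apply: le_trans hs; apply: le_trans (ler_sum_term _ i _) => [|k]; last first.
  by rewrite sumr_ge0 // => *; exact: sqr_ge0.
by apply: (ler_sum_term (fun l => A i l ^+ 2)) => l; exact: sqr_ge0.
Qed.

Lemma sum_col_le_norm1 {m n} (A : 'M[R]_(m, n)) j : \sum_i `|A i j| <= norm1 A.
Proof. exact: (le_bigmax _ (fun j => \sum_i `|A i j|)). Qed.

Lemma norm1_ge0 {m n} (A : 'M[R]_(m, n)) : 0 <= norm1 A.
Proof. exact: bigmax_ge_id. Qed.

Lemma mulmx_entry_le {m p n} (A : 'M[R]_(m, p)) (B : 'M[R]_(p, n)) i j :
  `|(A *m B) i j| <= normF A * \sum_k `|B k j|.
Proof.
rewrite mxE mulr_sumr; apply: le_trans (ler_norm_sum _ _ _) _.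
by apply: ler_sum => k _; rewrite normrM ler_wpM2r // entry_le_sqrt.
Qed.

Lemma sum_delta_mx {m n} (i0 : 'I_m) (j0 : 'I_n) :
  \sum_i \sum_j delta_mx i0 j0 i j = 1 :> R.
Proof.
rewrite (bigD1 i0) //= [X in _ + X]big1 ?addr0 => [|i /negbTE ii0]; last first.
  by apply: big1 => j _; rewrite mxE ii0.
rewrite (bigD1 j0) //= [X in _ + X]big1 ?addr0 => [|j /negbTE jj0]; last first.
  by rewrite mxE jj0 andbF.
by rewrite mxE !eqxx.
Qed.

Lemma sqF_delta_mx {m n} (i0 : 'I_m) (j0 : 'I_n) :
  sqF (delta_mx i0 j0 : 'M[R]_(m, n)) = 1.
Proof.
rewrite -(sum_delta_mx i0 j0); apply: eq_bigr => i _; apply: eq_bigr => j _.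
by rewrite mxE; case: (_ && _); rewrite ?expr1n ?expr0n.
Qed.

End MatrixNorms.

Section Model.
Context {R : realType} {N0 N1 N : nat} {X : 'M[R]_(N0, N)} {lam1 lam2 beta : R}.
Local Notation V := (var R N0 N1 N).
Local Notation Oobj := (Oobj X lam1 lam2 beta).
Implicit Types (y z d u : V) (t : R).

Definition line z d t : V := vadd z (vscale t d).

Definition enc y n i : R := (zW y *m col n X + zb1 y) i ord0.
Definition dec y n j : R := ((zW y)^T *m col n (zV y) + zb2 y) j ord0.

Lemma line0 z d : line z d 0 = z.
Proof. by case: z => *; rewrite /line /vadd /vscale /= !scale0r !addr0. Qed.

Lemma is_dirderivE f z d l :
  is_dirderiv f z d l = is_rderiv0 (fun t => f (line z d t)) l.
Proof. by rewrite /is_rderiv0 line0. Qed.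

Lemma vsub_line z d t : vsub (line z d t) z = vscale t d.
Proof.
case: z => *; case: d => *; rewrite /vsub /line /vadd /vscale /=.
by congr Var; rewrite scaleN1r addrC addKr.
Qed.

Lemma vsub_vadd z u : vsub (vadd z u) z = u.
Proof.
by case: z u => ? ? ? ? [? ? ? ?]; rewrite /vsub /vadd /vscale /=; congr Var;
  rewrite scaleN1r addrAC subrr add0r.
Qed.

Lemma zV_line z d t i n : zV (line z d t) i n = zV z i n + t * zV d i n.
Proof. by rewrite !mxE. Qed.

Lemma decE y n j : dec y n j = \sum_k zW y k j * zV y k n + zb2 y j ord0.
Proof. by rewrite /dec !mxE; congr (_ + _); apply: eq_bigr => k _; rewrite !mxE. Qed.

Lemma enc_vadd y u n i : enc (vadd y u) n i = enc y n i + enc u n i.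
Proof. by rewrite /enc /= mulmxDl !mxE addrACA. Qed.

Lemma enc_vscale c y n i : enc (vscale c y) n i = c * enc y n i.
Proof. by rewrite /enc /= -scalemxAl -scalerDr mxE. Qed.

Lemma enc_vsub y u n i : enc (vsub y u) n i = enc y n i - enc u n i.
Proof. by rewrite enc_vadd enc_vscale mulN1r. Qed.

Lemma enc_line z d t n i : enc (line z d t) n i = enc z n i + t * enc d n i.
Proof. by rewrite enc_vadd enc_vscale. Qed.

Lemma dec_line z d t n j : dec (line z d t) n j =
  \sum_k (zW z k j + t * zW d k j) * (zV z k n + t * zV d k n)
  + (zb2 z j ord0 + t * zb2 d j ord0).
Proof. by rewrite decE; congr (_ + _); [apply: eq_bigr => k _|]; rewrite !mxE. Qed.

Lemma Fobj_dec y :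
  Fobj X y = N%:R^-1 * \sum_n \sum_j (Num.max (dec y n j) 0 - X j n) ^+ 2.
Proof.
rewrite /Fobj /sqF; congr (_ * _); apply: eq_bigr => n _; apply: eq_bigr => j _.
by rewrite big_ord1 /dec !mxE.
Qed.

Lemma Pobj_enc y :
  Pobj X beta y = beta * \sum_n \sum_i (zV y i n - Num.max (enc y n i) 0).
Proof.
rewrite /Pobj; congr (_ * _); apply: eq_bigr => n _; apply: eq_bigr => i _.
by rewrite /enc !mxE.
Qed.

Definition ddec z d n j : R :=
  \sum_k (zW d k j * zV z k n + zW z k j * zV d k n) + zb2 d j ord0.

Definition dPobj z d : R :=
  beta * \sum_n \sum_i (zV d i n - dmax0 (enc z n i) (enc d n i)).

Lemma is_rderiv0_dec z d n j :
  is_rderiv0 (fun t => dec (line z d t) n j) (ddec z d n j).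
Proof.
have hsum := is_rderiv0_sum (index_enum _) (fun k =>
  is_rderiv0M (is_rderiv0_affine (zW z k j) (zW d k j))
              (is_rderiv0_affine (zV z k n) (zV d k n))).
apply: is_rderiv0_eq (is_rderiv0D hsum (is_rderiv0_affine _ _)) _ _ => [t|].
  exact: dec_line.
by congr (_ + _); apply: eq_bigr => k _; rewrite !mul0r !addr0.
Qed.

Lemma ex_Fobj_rderiv z d : exists A, is_rderiv0 (fun t => Fobj X (line z d t)) A.
Proof.
have hsq n j := is_rderiv0M
  (is_rderiv0D (is_rderiv0_max0 (is_rderiv0_dec z d n j)) (is_rderiv0_cst (- X j n)))
  (is_rderiv0D (is_rderiv0_max0 (is_rderiv0_dec z d n j)) (is_rderiv0_cst (- X j n))).
have hsum := is_rderiv0Ml N%:R^-1 (is_rderiv0_sum (index_enum _) (fun n =>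
  is_rderiv0_sum (index_enum _) (hsq n))).
by eexists; apply: is_rderiv0_eq hsum _ erefl => t; rewrite Fobj_dec.
Qed.

Lemma Robj_rderiv z d :
  is_rderiv0 (fun t => Robj lam1 lam2 (line z d t)) (gradR_dot lam1 lam2 z d).
Proof.
have hV := is_rderiv0_sum (index_enum _) (fun n => is_rderiv0_sum (index_enum _)
  (fun i => is_rderiv0_affine (zV z i n) (zV d i n))).
have hW := is_rderiv0_sum (index_enum _) (fun i => is_rderiv0_sum (index_enum _)
  (fun j => is_rderiv0M (is_rderiv0_affine (zW z i j) (zW d i j))
                        (is_rderiv0_affine (zW z i j) (zW d i j)))).
apply: is_rderiv0_eq (is_rderiv0D (is_rderiv0Ml lam1 hV) (is_rderiv0Ml lam2 hW)) _ _.
  move=> t; congr (_ * _ + _ * _); apply: eq_bigr => a _; apply: eq_bigr => b _.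
    by rewrite !mxE.
  by rewrite !mxE expr2.
rewrite /gradR_dot; congr (_ + _ * _).
rewrite mulr_sumr; apply: eq_bigr => i _; rewrite mulr_sumr; apply: eq_bigr => j _.
by rewrite !mul0r !addr0; ring.
Qed.

Lemma Pobj_rderiv z d :
  is_rderiv0 (fun t => Pobj X beta (line z d t)) (dPobj z d).
Proof.
have hP := is_rderiv0_sum (index_enum _) (fun n => is_rderiv0_sum (index_enum _)
  (fun i => is_rderiv0D (is_rderiv0_affine (zV z i n) (zV d i n))
     (is_rderiv0N (is_rderiv0_max0 (is_rderiv0_affine (enc z n i) (enc d n i)))))).
apply: is_rderiv0_eq (is_rderiv0Ml beta hP) _ _ => [t|].
  by rewrite Pobj_enc; congr (_ * _); apply: eq_bigr => n _; apply: eq_bigr => i _;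
    rewrite zV_line enc_line.
by congr (_ * _); apply: eq_bigr => n _; apply: eq_bigr => i _; rewrite mul0r addr0.
Qed.

Lemma Oobj_rderiv {z d A} : is_rderiv0 (fun t => Fobj X (line z d t)) A ->
  is_rderiv0 (fun t => Oobj (line z d t)) (A + gradR_dot lam1 lam2 z d + dPobj z d).
Proof.
by move=> hF; apply: is_rderiv0D (Pobj_rderiv z d); apply: is_rderiv0D (Robj_rderiv z d).
Qed.

Lemma znorm_ge0 y : 0 <= znorm y.
Proof. exact: sqrtr_ge0. Qed.

Lemma znorm_vscale c y : znorm (vscale c y) = `|c| * znorm y.
Proof. by rewrite /znorm /= !sqF_vscale -!mulrDr sqrtrM ?sqr_ge0 // sqrtr_sqr. Qed.

Local Ltac sqF_lra y := have := sqF_ge0 (zW y); have := sqF_ge0 (zb1 y);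
  have := sqF_ge0 (zb2 y); have := sqF_ge0 (zV y); lra.

Lemma zb1_le_znorm y i : `|zb1 y i ord0| <= znorm y.
Proof. by apply: entry_le_sqrt; sqF_lra y. Qed.

Lemma zb2_le_znorm y j : `|zb2 y j ord0| <= znorm y.
Proof. by apply: entry_le_sqrt; sqF_lra y. Qed.

Lemma zV_le_znorm y i n : `|zV y i n| <= znorm y.
Proof. by apply: entry_le_sqrt; sqF_lra y. Qed.

Lemma normF_zW_le_znorm y : normF (zW y) <= znorm y.
Proof. by rewrite ler_sqrt; [sqF_lra y | rewrite !addr_ge0 ?sqF_ge0]. Qed.

Lemma enc_le_znorm y n i : `|enc y n i| <= (norm1 X + 1) * znorm y.
Proof.
rewrite /enc mxE mulrDl mul1r; apply: le_trans (ler_normD _ _) _.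
apply: lerD; last exact: zb1_le_znorm.
apply: le_trans (mulmx_entry_le _ _ _ _) _; rewrite mulrC.
apply: ler_pM; rewrite ?sqrtr_ge0 ?sumr_ge0 ?normF_zW_le_znorm //.
by apply: le_trans (sum_col_le_norm1 X n); apply: ler_sum => k _; rewrite mxE.
Qed.

Lemma vscaleKV c y : c != 0 -> vscale c^-1 (vscale c y) = y.
Proof.
by move=> c0; case: y => *; rewrite /vscale /=; congr Var; rewrite scalerA mulVf ?scale1r.
Qed.

Lemma znorm_vsubvv y : znorm (vsub y y) = 0.
Proof.
by rewrite /znorm /= !scaleN1r !subrr !sqF0 !addr0 sqrtr0.
Qed.

Lemma tangent_cone_sub {S S' : set V} {z d} :
  S `<=` S' -> tangent_cone S z d -> tangent_cone S' z d.
Proof. by move=> SS' [y [tau [Sy rest]]]; exists y, tau; split => // k; exact: SS'. Qed.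

Lemma tangent_cone_near (S : set V) z d (y : nat -> V) (tau : nat -> R) :
  (\forall k \near \oo, S (y k)) -> (forall k, 0 < tau k) -> tau @ \oo --> 0 ->
  (fun k => znorm (vsub (y k) z)) @ \oo --> 0 ->
  (fun k => znorm (vsub (vscale (tau k)^-1 (vsub (y k) z)) d)) @ \oo --> 0 ->
  tangent_cone S z d.
Proof.
move=> [K _ SyK] tau_gt0 tau0 yz dy.
exists (fun k => y (k + K)%N), (fun k => tau (k + K)%N).
split; first by move=> k; apply: SyK; rewrite /= leq_addl.
split=> [k|]; first exact: tau_gt0.
by rewrite (cvg_shiftn K tau) (cvg_shiftn K (fun k => znorm (vsub (y k) z)))
  (cvg_shiftn K (fun k => znorm (vsub (vscale (tau k)^-1 (vsub (y k) z)) d))).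
Qed.

Lemma tangent_cone_feasible {S : set V} {z d g} : 0 < g ->
  (forall t, 0 < t <= g -> S (line z d t)) -> tangent_cone S z d.
Proof.
move=> g_gt0 Sline.
have h_gt0 k : 0 < harmonic k :> R by rewrite harmonic_gt0.
apply: (tangent_cone_near _ _ _ (fun k => line z d (harmonic k)) harmonic) => //.
- near=> k; apply: Sline; rewrite h_gt0 ltW //.
  by near: k; exact: cvgr_lt cvg_harmonic _ g_gt0.
- exact: cvg_harmonic.
- under eq_fun do rewrite vsub_line znorm_vscale.
  rewrite -(mul0r (znorm d)); apply: cvgM; last exact: cvg_cst.
  by rewrite -(@normr0 _ R); exact: cvg_norm cvg_harmonic.
- apply: cvg_near_eq (cvg_cst 0); near=> k.
  by rewrite vsub_line vscaleKV ?lt0r_neq0 // znorm_vsubvv.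
Unshelve. all: by end_near. Qed.

Lemma lip_rderiv_le {f} {S : set V} {L z d a} : lip_const_on f S L -> S z ->
  (\forall t \near 0^'+, S (line z d t)) ->
  is_rderiv0 (fun t => f (line z d t)) a -> a <= L * znorm d.
Proof.
move=> [L_ge0 hL] Sz Sline hf; apply: cvgr_to_le hf _; near=> t.
have t_gt0 : 0 < t by near: t; exact: nbhs_right_gt.
rewrite line0 ler_pdivrMr //; apply: le_trans (ler_norm _) _.
apply: le_trans (hL _ _ _ Sz) _; first by near: t.
by rewrite vsub_line znorm_vscale gtr0_norm // mulrCA mulrC.
Unshelve. all: by end_near. Qed.

Lemma dstat_on_rderiv {f} {S : set V} {z d l} : dstat_on f S z -> tangent_cone S z d ->
  is_rderiv0 (fun t => f (line z d t)) l -> 0 <= l.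
Proof. by move=> [_ stat] /stat/(_ l); rewrite is_dirderivE. Qed.

Lemma Omega2_enc y : Omega2 X y <-> forall n i, Num.max (enc y n i) 0 <= zV y i n.
Proof. by split => h n i; have := h n i; rewrite /enc !mxE. Qed.

Lemma Omega1_enc y : Omega1 X y <-> forall n i, zV y i n = Num.max (enc y n i) 0.
Proof.
split => [h n i | h n]; first by have /matrixP/(_ i ord0) := h n; rewrite /enc !mxE.
by apply/matrixP => i j; rewrite (ord1 j) !mxE h /enc !mxE.
Qed.

Lemma Omega1_sub2 : Omega1 (N1 := N1) X `<=` Omega2 X.
Proof. by move=> y /Omega1_enc h; apply/Omega2_enc => n i; rewrite h. Qed.

Lemma zV_vsub y u i n : zV (vsub y u) i n = zV y i n - zV u i n.
Proof. by rewrite !mxE mulN1r. Qed.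

Lemma tangent_Omega1_zV {z d} n i : Omega1 X z -> tangent_cone (Omega1 X) z d ->
  zV d i n = dmax0 (enc z n i) (enc d n i).
Proof.
move=> /Omega1_enc z1 [y [tau [y1 [tau_gt0 [tau0 [_ ud]]]]]].
set a := enc z n i; set c := enc d n i.
pose u k := vscale (tau k)^-1 (vsub (y k) z).
pose g t := (Num.max (a + t * c) 0 - Num.max a 0) / t.
have gc : g (tau k) @[k --> \oo] --> dmax0 a c.
  have := is_rderiv0_max0 (is_rderiv0_affine a c).
  rewrite /is_rderiv0 /= mul0r addr0 => /cvg_at_rightP; apply; exact: (conj tau_gt0).
have uV : zV (u k) i n @[k --> \oo] --> zV d i n.
  by apply: (cvg_dist_le 1 ud) => k; rewrite mul1r distrC -zV_vsub zV_le_znorm.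
have ug k : `|zV (u k) i n - g (tau k)| <= `|enc (u k) n i - c|.
  have tau_neq0 : tau k != 0 by rewrite lt0r_neq0.
  have ency : enc (y k) n i = a + tau k * enc (u k) n i.
    by rewrite enc_vscale enc_vsub mulrA mulfV // mul1r addrC subrK.
  have -> : zV (u k) i n - g (tau k) =
      (Num.max (a + tau k * enc (u k) n i) 0 - Num.max (a + tau k * c) 0) / tau k.
    by rewrite /u /g /= !mxE z1 (Omega1_enc _).1 // ency; field.
  rewrite normrM normfV ler_pdivrMr ?normr_gt0 //; apply: le_trans (ler_dist_max0 _ _) _.
  by rewrite opprD addrACA subrr add0r -mulrBr normrM mulrC.
have encc : `|enc (u k) n i - c| @[k --> \oo] --> 0.
  apply: (cvg_dist_le (norm1 X + 1) ud) => k.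
  by rewrite sub0r normrN normr_id -enc_vsub enc_le_znorm.
have gap : zV (u k) i n - g (tau k) @[k --> \oo] --> 0.
  by apply: (cvg_dist_le 1 encc) => k; rewrite sub0r normrN mul1r.
have uVg : zV (u k) i n @[k --> \oo] --> dmax0 a c + 0.
  have sum_cvg : g (tau k) + (zV (u k) i n - g (tau k)) @[k --> \oo] --> dmax0 a c + 0.
    exact: cvgD.
  by apply: cvg_near_eq sum_cvg; near=> k; rewrite addrC subrK.
rewrite addr0 in uVg.
exact: (cvg_unique _ uV uVg).
Unshelve. all: by end_near. Qed.

Lemma dstat_R_of_Omega2 {z} : Omega1 X z -> dstat_on Oobj (Omega2 X) z ->
  dstat_R X lam1 lam2 z.
Proof.
move=> z1 stat; split=> // d tc l; rewrite is_dirderivE => hF.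
have := dstat_on_rderiv stat (tangent_cone_sub Omega1_sub2 tc) (Oobj_rderiv hF).
suff -> : dPobj z d = 0 by rewrite addr0.
rewrite /dPobj big1 ?mulr0 // => n _; rewrite big1 // => i _.
by rewrite (tangent_Omega1_zV n i z1 tc) subrr.
Qed.

Definition vdir i0 n0 : V := Var 0 0 0 (- delta_mx i0 n0).

Lemma enc_vdir i0 n0 n i : enc (vdir i0 n0) n i = 0.
Proof. by rewrite /enc /= mul0mx add0r mxE. Qed.

Lemma znorm_vdir i0 n0 : znorm (vdir i0 n0) = 1.
Proof. by rewrite /znorm /= !sqF0 sqFN sqF_delta_mx !add0r sqrtr1. Qed.

Lemma dPobj_vdir z i0 n0 : dPobj z (vdir i0 n0) = - beta.
Proof.
rewrite /dPobj exchange_big -[RHS]mulrN1 -(sum_delta_mx i0 n0) -sumrN; congr (_ * _).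
apply: eq_bigr => i _; rewrite -sumrN; apply: eq_bigr => n _.
by rewrite enc_vdir dmax0_0 !mxE subr0.
Qed.

Lemma Zset_line_vdir alpha z i0 n0 t : Zset X alpha z ->
  0 < t <= zV z i0 n0 - Num.max (enc z n0 i0) 0 -> Zset X alpha (line z (vdir i0 n0) t).
Proof.
move=> [/Omega2_enc z2 z3] /andP[t_gt0 t_le]; split; last first.
  by rewrite /Omega3 /bnormInf /= !scaler0 !addr0.
apply/Omega2_enc => n i; rewrite enc_line enc_vdir mulr0 addr0 zV_line !mxE.
have [/andP[/eqP -> /eqP ->]|_] := boolP ((i == i0) && (n == n0)); last first.
  by rewrite mulr0n oppr0 mulr0 addr0.
by rewrite mulrN1; lra.
Qed.

Lemma Omega1_of_dstat_Zset {alpha theta LF LR z} :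
  lip_const_on (Fobj X) (Omega_theta (N1:=N1) X lam1 lam2 beta theta) LF ->
  lip_const_on (Robj lam1 lam2) (Omega_theta (N1:=N1) X lam1 lam2 beta theta) LR ->
  LF + LR < beta -> Oobj z < theta -> dstat_on Oobj (Zset X alpha) z -> Omega1 X z.
Proof.
move=> hLF hLR hbeta hO stat; have zZ := stat.1; apply/Omega1_enc => n0 i0.
apply/eqP; rewrite eq_le ((Omega2_enc z).1 zZ.1 n0 i0) andbT leNgt; apply/negP => slack.
set g := zV z i0 n0 - Num.max (enc z n0 i0) 0; set d := vdir i0 n0.
have g_gt0 : 0 < g by rewrite subr_gt0.
have feas t : 0 < t <= g -> Zset X alpha (line z d t) by exact: Zset_line_vdir.
have [A hA] := ex_Fobj_rderiv z d; have hOd := Oobj_rderiv hA.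
have zth : Omega_theta X lam1 lam2 beta theta z by split; [exact: zZ.1 | exact: ltW].
have near_theta : \forall t \near 0^'+, Omega_theta X lam1 lam2 beta theta (line z d t).
  have Oc := is_rderiv0_cvg hOd; rewrite /= line0 in Oc.
  near=> t; split; first apply: (feas t _).1.
    rewrite (ltW (_ : t < g)) ?andbT; near: t.
      exact: nbhs_right_gt.
    exact: nbhs_right_lt.
  by apply: ltW; near: t; exact: cvgr_lt Oc _ hO.
have := dstat_on_rderiv stat (tangent_cone_feasible g_gt0 feas) hOd.
have := lip_rderiv_le hLF zth near_theta hA.
have := lip_rderiv_le hLR zth near_theta (Robj_rderiv z d).
by rewrite dPobj_vdir znorm_vdir !mulr1; lra.
Unshelve. all: by end_near. Qed.

Definition Vsum y : R := \sum_n \sum_i zV y i n.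

Lemma Robj_Vsum y : Robj lam1 lam2 y = lam1 * Vsum y + lam2 * sqF (zW y).
Proof. by []. Qed.

Lemma Fobj_ge0 y : 0 <= Fobj X y.
Proof.
by apply: mulr_ge0; rewrite ?invr_ge0 ?ler0n ?sumr_ge0 // => n _; exact: sqF_ge0.
Qed.

Lemma Omega2_zV_ge0 y i n : Omega2 X y -> 0 <= zV y i n.
Proof. by move=> /Omega2_enc/(_ n i); apply: le_trans; rewrite le_max lexx orbT. Qed.

Lemma Omega2_Pobj_ge0 y : 0 < beta -> Omega2 X y -> 0 <= Pobj X beta y.
Proof.
move=> beta_gt0 /Omega2_enc y2; rewrite Pobj_enc; apply: mulr_ge0; first exact: ltW.
by apply: sumr_ge0 => n _; apply: sumr_ge0 => i _; rewrite subr_ge0.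
Qed.

Lemma Omega2_colsum_le_Vsum y n : Omega2 X y -> \sum_i zV y i n <= Vsum y.
Proof.
move=> y2; apply: (ler_sum_term (fun m => \sum_i zV y i m)) => m.
by rewrite sumr_ge0 // => i _; exact: Omega2_zV_ge0.
Qed.

Lemma Omega3_zb1 alpha y i : Omega3 alpha y -> `|zb1 y i ord0| <= alpha.
Proof.
apply: le_trans; rewrite /bnormInf le_max /normInf; apply/orP; left.
by apply: le_trans (le_bigmax _ _ i); exact: (le_bigmax _ (fun j => `|zb1 y i j|) ord0).
Qed.

Lemma Omega3_zb2 alpha y j : Omega3 alpha y -> `|zb2 y j ord0| <= alpha.
Proof.
apply: le_trans; rewrite /bnormInf le_max /normInf; apply/orP; right.
by apply: le_trans (le_bigmax _ _ j); exact: (le_bigmax _ (fun k => `|zb2 y j k|) ord0).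
Qed.

Lemma Omega3_of_entries alpha y : 0 <= alpha ->
  (forall i, `|zb1 y i ord0| <= alpha) -> (forall j, `|zb2 y j ord0| <= alpha) ->
  Omega3 alpha y.
Proof.
move=> alpha_ge0 hb1 hb2; rewrite /Omega3 /bnormInf /= ge_max.
by apply/andP; split; apply: bigmax_le => // i _; apply: bigmax_le => // j _;
  rewrite (ord1 j).
Qed.

Lemma Oobj_relu_congr y y' : zW y = zW y' -> zV y = zV y' ->
  (forall n i, Num.max (enc y n i) 0 = Num.max (enc y' n i) 0) ->
  (forall n j, Num.max (dec y n j) 0 = Num.max (dec y' n j) 0) ->
  Oobj y = Oobj y'.
Proof.
move=> eW eV eP eF; rewrite /Oobj !Fobj_dec !Pobj_enc /Robj eW eV.
congr (_ * _ + _ + _ * _); apply: eq_bigr => n _; apply: eq_bigr => k _.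
  by rewrite eF.
by rewrite eP.
Qed.

Section Clip.
Variables (m1 : pred 'I_N1) (m2 : pred 'I_N0).

Definition clip u : V := Var (zW u)
  (\col_i (if m1 i then 0 else zb1 u i ord0))
  (\col_j (if m2 j then 0 else zb2 u j ord0)) (zV u).

Lemma clip_vadd u u' : clip (vadd u u') = vadd (clip u) (clip u').
Proof.
by congr Var; apply/matrixP => i j; rewrite !mxE; case: ifP; rewrite ?addr0.
Qed.

Lemma clip_vscale c u : clip (vscale c u) = vscale c (clip u).
Proof.
by congr Var; apply/matrixP => i j; rewrite !mxE; case: ifP; rewrite ?mulr0.
Qed.

Lemma clip_vsub u u' : clip (vsub u u') = vsub (clip u) (clip u').
Proof. by rewrite clip_vadd clip_vscale. Qed.

Lemma znorm_clip_le u : znorm (clip u) <= znorm u.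
Proof.
have sqF_clip m (b : 'cV[R]_m) (P : pred 'I_m) :
    sqF (\col_i (if P i then 0 else b i ord0)) <= sqF b.
  apply: ler_sum => i _; apply: ler_sum => j _; rewrite !mxE (ord1 j).
  by case: ifP; rewrite ?expr0n ?sqr_ge0.
rewrite ler_sqrt; last by rewrite !addr_ge0 ?sqF_ge0.
by rewrite /= !lerD ?sqF_clip.
Qed.

Lemma tangent_cone_clip {S S' : set V} {z d} :
  (forall y : nat -> V, (forall k, S (y k)) ->
     (fun k => znorm (vsub (y k) z)) @ \oo --> 0 ->
     \forall k \near \oo, S' (vadd z (clip (vsub (y k) z)))) ->
  tangent_cone S z d -> tangent_cone S' z (clip d).
Proof.
move=> SS' [y [tau [Sy [tau_gt0 [tau0 [yz dy]]]]]].
apply: (tangent_cone_near _ _ _ (fun k => vadd z (clip (vsub (y k) z))) tau) => //.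
- exact: SS'.
- apply: (cvg_dist_le 1 yz) => k; rewrite vsub_vadd sub0r normrN mul1r ger0_norm.
    exact: znorm_clip_le.
  exact: znorm_ge0.
- apply: (cvg_dist_le 1 dy) => k; rewrite vsub_vadd sub0r normrN mul1r ger0_norm.
    by rewrite -clip_vscale -clip_vsub; exact: znorm_clip_le.
  exact: znorm_ge0.
Qed.

Lemma enc_clip u n i : ~~ m1 i -> enc (clip u) n i = enc u n i.
Proof. by move=> /negbTE m1i; rewrite /enc !mxE m1i. Qed.

Lemma zb1_vadd_clip z u i :
  zb1 (vadd z (clip u)) i ord0 = zb1 z i ord0 + (if m1 i then 0 else zb1 u i ord0).
Proof. by rewrite !mxE. Qed.

Lemma zb2_vadd_clip z u j :
  zb2 (vadd z (clip u)) j ord0 = zb2 z j ord0 + (if m2 j then 0 else zb2 u j ord0).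
Proof. by rewrite !mxE. Qed.

Lemma Oobj_line_clip_near z d :
  (forall i, m1 i -> forall n, enc z n i < 0) ->
  (forall j, m2 j -> forall n, dec z n j < 0) ->
  \forall t \near 0^'+, Oobj (line z (clip d) t) = Oobj (line z d t).
Proof.
move=> enc_lt0 dec_lt0.
have eP n i : \forall t \near 0^'+,
    Num.max (enc (line z (clip d) t) n i) 0 = Num.max (enc (line z d t) n i) 0.
  have [m1i|m1i] := boolP (m1 i); last by near=> t; rewrite !enc_line enc_clip.
  have lt0 c : \forall t \near 0^'+, enc z n i + t * c < 0.
    by apply: is_rderiv0_lt0 (is_rderiv0_affine _ c) _; rewrite mul0r addr0 enc_lt0.
  near=> t; rewrite !enc_line !max_r ?ltW //; near: t; exact: lt0.
have eF n j : \forall t \near 0^'+,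
    Num.max (dec (line z (clip d) t) n j) 0 = Num.max (dec (line z d t) n j) 0.
  have [m2j|m2j] := boolP (m2 j); last first.
    by near=> t; rewrite !dec_line !mxE (negbTE m2j).
  have lt0 d' : \forall t \near 0^'+, dec (line z d' t) n j < 0.
    by apply: is_rderiv0_lt0 (is_rderiv0_dec z d' n j) _; rewrite line0 dec_lt0.
  near=> t; rewrite !max_r ?ltW //; near: t; exact: lt0.
near=> t; apply: Oobj_relu_congr => //.
- by near: t; apply: filter_forall => n; apply: filter_forall => i; exact: eP.
- by near: t; apply: filter_forall => n; apply: filter_forall => j; exact: eF.
Unshelve. all: by end_near. Qed.

End Clip.

Section AlphaBounds.
Context {theta : R} {z : V}.
Hypotheses (N0_gt0 : (0 < N0)%N) (N1_gt0 : (0 < N1)%N) (N_gt0 : (0 < N)%N).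
Hypotheses (lam1_gt0 : 0 < lam1) (lam2_gt0 : 0 < lam2) (beta_gt0 : 0 < beta).
Hypotheses (z2 : Omega2 X z) (Oz : Oobj z < theta).

Local Notation alpha := (alpha_of N1 X lam1 lam2 theta).
Local Notation s1 := (Num.sqrt ((N1 * N0)%:R * theta / lam2)).

Let Oobj_parts :
  [/\ Fobj X z < theta, lam1 * Vsum z < theta & lam2 * sqF (zW z) < theta].
Proof.
have V_ge0 : 0 <= lam1 * Vsum z.
  apply: mulr_ge0; first exact: ltW.
  by apply: sumr_ge0 => n _; apply: sumr_ge0 => i _; exact: Omega2_zV_ge0.
have W_ge0 : 0 <= lam2 * sqF (zW z) by apply: mulr_ge0; [exact: ltW | exact: sqF_ge0].
move: Oz (Fobj_ge0 z) (Omega2_Pobj_ge0 z beta_gt0 z2).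
by rewrite /Oobj Robj_Vsum => *; split; lra.
Qed.

Let theta_gt0 : 0 < theta.
Proof. by have [FO _ _] := Oobj_parts; exact: le_lt_trans (Fobj_ge0 z) FO. Qed.

Let Vsum_lt : Vsum z < theta / lam1.
Proof. by have [_ VO _] := Oobj_parts; rewrite ltr_pdivlMr // mulrC. Qed.

Let normF_zW_le : normF (zW z) <= s1.
Proof.
have [_ _ WO] := Oobj_parts.
have N1N0_ge1 : 1 <= (N1 * N0)%:R :> R by rewrite ler1n muln_gt0 N1_gt0 N0_gt0.
rewrite ler_sqrt; last by rewrite divr_ge0 ?mulr_ge0 ?ler0n // ltW.
rewrite ler_pdivlMr // mulrC; apply: le_trans (ltW WO) _.
by rewrite ler_peMl // ltW.
Qed.

Let enc_bias_le n i : `|enc z n i - zb1 z i ord0| <= s1 * norm1 X.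
Proof.
rewrite /enc mxE addrK; apply: le_trans (mulmx_entry_le _ _ _ _) _.
apply: ler_pM; rewrite ?sqrtr_ge0 ?sumr_ge0 //.
by apply: le_trans (sum_col_le_norm1 X n); apply: ler_sum => k _; rewrite mxE.
Qed.

Let dec_bias_le n j : `|dec z n j - zb2 z j ord0| <= theta / lam1 * s1.
Proof.
rewrite /dec mxE addrK; apply: le_trans (mulmx_entry_le _ _ _ _) _.
rewrite mulrC /normF sqF_tr; apply: ler_pM; rewrite ?sqrtr_ge0 ?sumr_ge0 //.
apply: (le_trans _ (ltW Vsum_lt)); apply: (le_trans _ (Omega2_colsum_le_Vsum z n z2)).
by apply: ler_sum => k _; rewrite mxE ger0_norm //; exact: Omega2_zV_ge0.
Qed.

Let alpha_ge_enc : theta / lam1 + s1 * norm1 X <= alpha.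
Proof. by rewrite le_max lexx. Qed.

Let alpha_ge_dec : theta / lam1 * s1 + Num.sqrt (N%:R * theta) + norm1 X <= alpha.
Proof.
have s1E : s1 = Num.sqrt ((N1 * N0)%:R * theta) / Num.sqrt lam2.
  by rewrite sqrtrM ?mulr_ge0 ?ler0n ?(ltW theta_gt0) // sqrtrV // ltW.
by rewrite s1E mulf_div le_max lexx orbT.
Qed.

Lemma enc_lt0_of_zb1 n i : zb1 z i ord0 = - alpha -> enc z n i < 0.
Proof.
move=> b1E; have := enc_bias_le n i; rewrite b1E ler_norml => /andP[_].
have : 0 < theta / lam1 by rewrite divr_gt0.
by move: alpha_ge_enc; lra.
Qed.

Lemma dec_lt0_of_zb2 n j : zb2 z j ord0 = - alpha -> dec z n j < 0.
Proof.
move=> b2E; have := dec_bias_le n j; rewrite b2E ler_norml => /andP[_].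
have : 0 < Num.sqrt (N%:R * theta) by rewrite sqrtr_gt0 mulr_gt0 ?ltr0n.
by move: alpha_ge_dec (norm1_ge0 X); lra.
Qed.

Let n0 : 'I_N := Ordinal N_gt0.

Lemma zb1_neq_alpha i : zb1 z i ord0 != alpha.
Proof.
apply/eqP => b1E; have := enc_bias_le n0 i; rewrite b1E ler_norml => /andP[+ _].
have /andP[enc_le _] : (enc z n0 i <= zV z i n0) && (0 <= zV z i n0).
  by rewrite -ge_max; exact: (Omega2_enc z).1 z2 n0 i.
have := ler_sum_term (fun k => zV z k n0) i (fun k => Omega2_zV_ge0 z k n0 z2).
move: Vsum_lt alpha_ge_enc (Omega2_colsum_le_Vsum z n0 z2); lra.
Qed.

Lemma zb2_neq_alpha j : zb2 z j ord0 != alpha.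
Proof.
apply/eqP => b2E; have := dec_bias_le n0 j; rewrite b2E ler_norml => /andP[dec_ge _].
have X_le : X j n0 <= norm1 X.
  apply: le_trans (ler_norm _) _; apply: le_trans (sum_col_le_norm1 X n0).
  exact: (ler_sum_term (fun k => `|X k n0|)).
have dec_le : dec z n0 j <= Num.max (dec z n0 j) 0 by rewrite le_max lexx.
have gap : Num.sqrt (N%:R * theta) <= Num.max (dec z n0 j) 0 - X j n0.
  by move: alpha_ge_dec; lra.
have Ntheta : N%:R * theta <= (Num.max (dec z n0 j) 0 - X j n0) ^+ 2.
  rewrite -[N%:R * theta]sqr_sqrtr ?mulr_ge0 ?ler0n ?(ltW theta_gt0) //.
  by rewrite !expr2; apply: ler_pM; rewrite ?sqrtr_ge0.
have [F_lt _ _] := Oobj_parts; suff : theta <= Fobj X z by lra.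
pose err n j := (Num.max (dec z n j) 0 - X j n) ^+ 2.
have err_le : err n0 j <= \sum_n \sum_j err n j.
  apply: le_trans (ler_sum_term _ n0 _) => [|n].
    by apply: (ler_sum_term (err n0)) => k; exact: sqr_ge0.
  by rewrite sumr_ge0 // => *; exact: sqr_ge0.
rewrite Fobj_dec; apply: le_trans (ler_wpM2l _ (le_trans Ntheta err_le)).
  by rewrite mulrA mulVf ?mul1r // pnatr_eq0 -lt0n.
by rewrite invr_ge0 ler0n.
Qed.

Hypothesis z3 : Omega3 alpha z.

Let act1 : pred 'I_N1 := fun i => zb1 z i ord0 == - alpha.
Let act2 : pred 'I_N0 := fun j => zb2 z j ord0 == - alpha.

Let alpha_gt0 : 0 < alpha.
Proof.
apply: lt_le_trans alpha_ge_enc; apply: ltr_pwDl; first by rewrite divr_gt0.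
by rewrite mulr_ge0 ?sqrtr_ge0 ?norm1_ge0.
Qed.

Section ClippedSequence.
Variable y : nat -> V.
Hypothesis y2 : forall k, Omega2 X (y k).
Hypothesis yz : (fun k => znorm (vsub (y k) z)) @ \oo --> 0.

Local Notation yc k := (vadd z (clip act1 act2 (vsub (y k) z))).

Let enc_yc_near n i : \forall k \near \oo, Num.max (enc (yc k) n i) 0 <= zV (y k) i n.
Proof.
have [a|a] := boolP (act1 i); last first.
  near=> k; rewrite enc_vadd enc_clip // enc_vsub addrC subrK.
  exact: (Omega2_enc _).1 (y2 k) n i.
have enc_gt0 : 0 < - enc z n i by rewrite oppr_gt0 enc_lt0_of_zb1 //; exact/eqP.
have C_gt0 : 0 < norm1 X + 1 by rewrite ltr_wpDl ?norm1_ge0.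
have small : \forall k \near \oo, znorm (vsub (y k) z) < - enc z n i / (norm1 X + 1).
  by apply: cvgr_lt yz _ _; rewrite divr_gt0.
near=> k; rewrite max_r; first exact: Omega2_zV_ge0.
rewrite enc_vadd; apply: ltW; apply: le_lt_trans (lerD (lexx _) (ler_norm _)) _.
apply: le_lt_trans (lerD (lexx _) (enc_le_znorm _ _ _)) _.
have : (norm1 X + 1) * znorm (clip act1 act2 (vsub (y k) z)) < - enc z n i.
  rewrite mulrC -ltr_pdivlMr //; apply: le_lt_trans (znorm_clip_le _ _ _) _.
  by near: k.
lra.
Unshelve. all: by end_near. Qed.

Let zb1_yc_near i : \forall k \near \oo, `|zb1 (yc k) i ord0| <= alpha.
Proof.
have yb : zb1 (y k) i ord0 @[k --> \oo] --> zb1 z i ord0.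
  apply: (cvg_dist_le 1 yz) => k; rewrite mul1r distrC.
  by have := zb1_le_znorm (vsub (y k) z) i; rewrite !mxE mulN1r.
near=> k; rewrite zb1_vadd_clip !mxE mulN1r; near: k.
apply: near_norm_le_clip yb (Omega3_zb1 _ _ i z3) _ => a.
by apply: ltr_norm_neq a; [exact: Omega3_zb1 | exact: zb1_neq_alpha].
Unshelve. all: by end_near. Qed.

Let zb2_yc_near j : \forall k \near \oo, `|zb2 (yc k) j ord0| <= alpha.
Proof.
have yb : zb2 (y k) j ord0 @[k --> \oo] --> zb2 z j ord0.
  apply: (cvg_dist_le 1 yz) => k; rewrite mul1r distrC.
  by have := zb2_le_znorm (vsub (y k) z) j; rewrite !mxE mulN1r.
near=> k; rewrite zb2_vadd_clip !mxE mulN1r; near: k.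
apply: near_norm_le_clip yb (Omega3_zb2 _ _ j z3) _ => a.
by apply: ltr_norm_neq a; [exact: Omega3_zb2 | exact: zb2_neq_alpha].
Unshelve. all: by end_near. Qed.

Lemma clip_near_Zset : \forall k \near \oo, Zset X alpha (yc k).
Proof.
have zV_yc k i n : zV (yc k) i n = zV (y k) i n by rewrite !mxE mulN1r addrCA subrr addr0.
near=> k; split.
  apply/Omega2_enc; under eq_forall do under eq_forall do rewrite zV_yc.
  by near: k; apply: filter_forall => n; apply: filter_forall => i; exact: enc_yc_near.
apply: Omega3_of_entries (ltW alpha_gt0) _ _.
  by near: k; apply: filter_forall; exact: zb1_yc_near.
by near: k; apply: filter_forall; exact: zb2_yc_near.
Unshelve. all: by end_near. Qed.

End ClippedSequence.

Lemma dstat_Omega2_of_Zset : dstat_on Oobj (Zset X alpha) z -> dstat_on Oobj (Omega2 X) z.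
Proof.
move=> stat; split=> // d tc l; rewrite is_dirderivE => hd.
apply: (dstat_on_rderiv stat (tangent_cone_clip act1 act2 _ tc)).
  by move=> y y2 yz; exact: clip_near_Zset.
apply: is_rderiv0_near_eq hd; last by rewrite !line0.
apply: Oobj_line_clip_near => [i /eqP b1 n|j /eqP b2 n].
  exact: enc_lt0_of_zb1.
exact: dec_lt0_of_zb2.
Qed.

End AlphaBounds.

End Model.

Theorem theorem2p3 (R : realType) (N0 N1 N : nat)
    (hN0 : (0 < N0)%N) (hN1 : (0 < N1)%N) (hN : (0 < N)%N)
    (X : 'M[R]_(N0, N)) (lam1 lam2 beta theta LF LR : R)
    (hlam1 : 0 < lam1) (hlam2 : 0 < lam2) (hbeta : 0 < beta)
    (htheta : N%:R^-1 * normF X ^+ 2 < theta)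
    (hLF : lip_const_on (Fobj X) (Omega_theta (N1:=N1) X lam1 lam2 beta theta) LF)
    (hLR : lip_const_on (Robj lam1 lam2) (Omega_theta (N1:=N1) X lam1 lam2 beta theta) LR)
    (hbetaL : LF + LR < beta)
    (zbar : var R N0 N1 N)
    (hZ : Zset X (alpha_of N1 X lam1 lam2 theta) zbar)
    (hO : Oobj X lam1 lam2 beta zbar < theta)
    (hstat : dstat_on (Oobj X lam1 lam2 beta) (Zset X (alpha_of N1 X lam1 lam2 theta)) zbar) :
  Omega1 X zbar /\
  dstat_on (Oobj X lam1 lam2 beta) (Omega2 X) zbar /\
  dstat_R X lam1 lam2 zbar.
Proof.
have [z2 z3] := hZ.
have z1 := Omega1_of_dstat_Zset hLF hLR hbetaL hO hstat.
have stat2 := dstat_Omega2_of_Zset hN0 hN1 hN hlam1 hlam2 hbeta z2 hO z3 hstat.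
by split; [|split; [|exact: dstat_R_of_Omega2 z1 stat2]].
Qed.
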